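(* Let $T$ be a finite rooted tree with a self-loop at the root and $|T|\ge2$, let $v$ be a vertex of $T$ (possibly the root) and $T(v)$ the subtree of descendants of $v$. For $t\in\mathbb N$ let $N_t$ be the number of visits to $T(v)$ during $t$ steps of simple random walk on $T$. Then \[ E_v[N_t]\le |T(v)|\Big[\frac{t+3}{|T|-1}+48|T|\Big]. \]
   Context: Degrees count the self-loop twice; simple random walk moves from a vertex along a uniformly chosen edge-end; $E_v$ is expectation for the walk started at $v$. The descendants of $v$ are the vertices farther from the root than $v$ whose unique path to the root contains $v$; $T(v)$ consists of $v$ and its descendants. $|\cdot|$ is the number of vertices. *)

From mathcomp Require Import all_boot all_order all_algebra.
Set Implicit Arguments. Unset Strict Implicit. Unset Printing Implicit Defensive.
Import Order.TTheory GRing.Theory Num.Theory.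
Local Open Scope ring_scope.

(* A finite rooted tree on the vertex type V is encoded by its parent map
   [p : V -> V] and root [r]: the root is its own parent and every vertex
   reaches the root by iterating [p].  The edges are {x, p x} for x <> r,
   plus (by the standing convention of the paper) a self-loop at the root. *)
Definition rooted_tree (V : finType) (p : V -> V) (r : V) : Prop :=
  p r = r /\ forall x : V, fconnect p x r.

Definition in_subtree (V : finType) (p : V -> V) (v u : V) : bool :=
  fconnect p u v.

(* Number of edge-ends at x leading to y: tree edges contribute 1, the
   self-loop at the root contributes 2 (both of its ends). *)
Definition adj (V : finType) (p : V -> V) (r : V) (x y : V) : nat :=
  ((x != y) && ((p x == y) || (p y == x))) + ((x == r) && (y == r)).*2.

Definition deg (V : finType) (p : V -> V) (r : V) (x : V) : nat :=
  \sum_(y : V) adj p r x y.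

Definition srw (R : fieldType) (V : finType) (p : V -> V) (r : V) (x y : V) : R :=
  (adj p r x y)%:R / (deg p r x)%:R.

Definition path_prob (R : fieldType) (V : finType) (p : V -> V) (r : V)
  (t : nat) (w : {ffun 'I_t.+1 -> V}) : R :=
  \prod_(i < t) srw R p r (w (widen_ord (leqnSn t) i)) (w (lift ord0 i)).

Definition visits (V : finType) (p : V -> V) (v : V) (t : nat)
  (w : {ffun 'I_t.+1 -> V}) : nat :=
  #|[set i : 'I_t.+1 | in_subtree p v (w i)]|.

Definition expected_visits (R : fieldType) (V : finType) (p : V -> V) (r v : V)
  (t : nat) : R :=
  \sum_(w : {ffun 'I_t.+1 -> V} | w ord0 == v)
     path_prob R p r w * (visits p v w)%:R.

From mathcomp Require Import all_boot all_order all_algebra.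
From mathcomp Require Import ring lra zify.
Import Order.TTheory GRing.Theory Num.Theory.
Set Implicit Arguments. Unset Strict Implicit. Unset Printing Implicit Defensive.

(* Give each vertex u the weight
   w(u) = deg(u) (c - [u in T(v)]) with c = |T(v)| / (|T| - 1), and let f(x) be
   the sum, over the non-root vertices z on the path from x to the root, of the
   total weight of T(z).  On a tree f solves the Poisson equation of simple
   random walk up to the root: the expected increment of f from x is
   [x in T(v)] - c, plus (total weight)/deg(r) when x = r.  Since the degrees
   in T(v) add up to at most 2 |T(v)|, the total weight is nonnegative and
   sum |w| = O(|T(v)|), so |f| = O(|T| |T(v)|).  Finally N_s - s c - f(X_s) is
   a supermartingale, whence E_v[N_t] <= (t+1) c + 2 max |f| + 1. *)

Section RootedTree.
Variables (V : finType) (p : V -> V) (r : V).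
Hypothesis tree : rooted_tree p r.

Lemma parent_root : p r = r. Proof. by case: tree. Qed.

Lemma iter_root m : iter m p r = r.
Proof. exact/iter_fix/parent_root. Qed.

Lemma iter_cycle_root m x : iter m.+1 p x = x -> x = r.
Proof.
move=> xcyc; have [_ /(_ x) /iter_findex xr] := tree.
have iter_mul q : iter (m.+1 * q) p x = x.
  by elim: q => [|q IHq]; rewrite ?muln0 // mulnS iterD IHq xcyc.
by rewrite -(iter_mul (findex p x r)) mulSnr iterD xr iter_root.
Qed.

Lemma parent_fixed x : (p x == x) = (x == r).
Proof.
by apply/eqP/eqP => [/(@iter_cycle_root 0)|->]; last exact: parent_root.
Qed.

Lemma fconnect_anti x y : fconnect p x y -> fconnect p y x -> x = y.
Proof.
move=> /iter_findex xy /iter_findex yx; move: xy.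
case Exy: (findex p x y) => [//|m] xy.
have /iter_cycle_root xr : iter (findex p y x + m).+1 p x = x.
  by rewrite -addnS iterD xy yx.
by move: xy; rewrite xr iter_root.
Qed.

Lemma fconnect_total u a b :
  fconnect p u a -> fconnect p u b -> fconnect p a b || fconnect p b a.
Proof.
move=> /iter_findex ua /iter_findex ub.
have [le_ab|/ltnW le_ba] := leqP (findex p u a) (findex p u b); apply/orP.
  by left; rewrite -ub -(subnK le_ab) iterD ua fconnect_iter.
by right; rewrite -ua -(subnK le_ba) iterD ub fconnect_iter.
Qed.

Definition is_child (x y : V) : bool := (p y == x) && (y != x).

Lemma child_not_ancestor x y : is_child x y -> ~~ fconnect p x y.
Proof.
case/andP=> /eqP pyx; apply: contra => xy; apply/eqP/esym/fconnect_anti => //.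
by rewrite -pyx fconnect1.
Qed.

Lemma child_on_path u x :
  fconnect p u x -> u != x -> exists2 y, is_child x y & fconnect p u y.
Proof.
move=> /iter_findex; move: (findex p u x) => m; elim: m u => [|m IHm] u.
  by move=> /= ->; rewrite eqxx.
rewrite iterSr => ux nux; have [pux|npux] := eqVneq (p u) x.
  by exists u; rewrite ?connect0 // /is_child pux eqxx.
have [y xy puy] := IHm _ ux npux.
by exists y => //; apply: connect_trans (fconnect1 _ _) puy.
Qed.

Lemma child_on_path_unique u x y y' : is_child x y -> is_child x y' ->
  fconnect p u y -> fconnect p u y' -> y = y'.
Proof.
move=> xy xy' uy uy'; have [//|yy'] := eqVneq y y'; exfalso.
have not_below a b :
    is_child x a -> is_child x b -> a != b -> ~~ fconnect p a b.
  move=> /andP[/eqP pax _] xb ab; rewrite fconnect_eqVf (negbTE ab) pax.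
  exact: child_not_ancestor.
case/orP: (fconnect_total uy uy'); apply/negP; first exact: not_below.
by apply: not_below; rewrite // eq_sym.
Qed.

Lemma count_children_on_path x u :
  (\sum_y (is_child x y && fconnect p u y) = fconnect p u x && (u != x))%N.
Proof.
have [/andP[ux nux]|no_path] := boolP (fconnect p u x && (u != x)).
  have [y xy uy] := child_on_path ux nux.
  rewrite (bigD1 y) ?xy ?uy //= big1 // => y' y'y; case: andP => // -[xy' uy'].
  by rewrite (child_on_path_unique xy' xy uy' uy) eqxx in y'y.
apply/eqP; rewrite sum_nat_eq0; apply/forallP => y; rewrite eqb0.
apply: contra no_path => /andP[xy uy]; have /andP[/eqP pyx _] := xy.
have -> /= : fconnect p u x.
  by apply: connect_trans uy _; rewrite -pyx fconnect1.
by apply: contraNneq (child_not_ancestor xy) => <-.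
Qed.

Lemma adjE x y : adj p r x y =
  ((y == p x) && (x != r) + is_child x y + ((x == r) && (y == r)).*2)%N.
Proof.
rewrite /adj /is_child; have [<-|xy] := eqVneq x y.
  by rewrite /= andbF [x == p x]eq_sym parent_fixed andbN andbb.
have -> : (x == r) && (y == r) = false.
  by apply: contraNF xy => /andP[/eqP-> /eqP->].
rewrite /= addn0 andbT [y == p x]eq_sym.
have [pxy|] := eqVneq (p x) y; last by rewrite add0n addn0.
have xr : x != r by apply: contra_neq xy => xr; rewrite -pxy xr parent_root.
suff -> : (p y == x) = false by rewrite xr.
apply: contraNF xr => /eqP pyx.
by apply/eqP/(@iter_cycle_root 1); rewrite /= pxy.
Qed.

Definition nchildren (x : V) : nat := \sum_y is_child x y.

Lemma deg_children x : deg p r x = (1 + (x == r) + nchildren x)%N.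
Proof.
rewrite /deg (eq_bigr _ (fun y _ => adjE x y)) !big_split /=.
rewrite (bigD1 (p x)) //= eqxx big1 ?addn0; last by move=> y /negbTE->.
rewrite [\sum_i _.*2](bigD1 r) //= eqxx andbT [\sum_(i | i != r) _]big1 ?addn0.
  by case: (x == r); rewrite /= ?addn0 ?add0n addnC.
by move=> y /negbTE->; rewrite andbF.
Qed.

Lemma deg_gt0 x : (0 < deg p r x)%N.
Proof. by rewrite deg_children. Qed.

Lemma sum_nchildren (A : pred V) :
  (\sum_(x | A x) nchildren x = \sum_y (A (p y) && (y != r)))%N.
Proof.
rewrite exchange_big /=; apply: eq_bigr => y _.
rewrite big_mkcond (bigD1 (p y)) //= big1 ?addn0 => [|x]; last first.
  by rewrite /is_child eq_sym => /negbTE->; rewrite if_same.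
by rewrite /is_child eqxx eq_sym parent_fixed; case: (A (p y)).
Qed.

Lemma sum_deg_handshake (A : pred V) :
  (\sum_(u | A u) deg p r u + \sum_(u | A u) (u != r) =
   2 * #|A| + \sum_y (A (p y) && (y != r)))%N.
Proof.
rewrite (eq_bigr _ (fun u _ => deg_children u)) !big_split /= sum_nchildren.
have root_or_not : (\sum_(u | A u) (u == r) + \sum_(u | A u) (u != r) = #|A|)%N.
  by rewrite -big_split -sum1_card; apply: eq_bigr => u _; case: (u == r).
rewrite sum1_card; lia.
Qed.

Lemma sum_deg : (\sum_x deg p r x = 2 * #|V|)%N.
Proof.
apply/eqP; rewrite -(eqn_add2r (\sum_(u | predT u) (u != r))).
by rewrite (sum_deg_handshake predT).
Qed.

Lemma sum_deg_le_closed (A : pred V) :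
  (forall y, A (p y) -> A y) -> (\sum_(u | A u) deg p r u <= 2 * #|A|)%N.
Proof.
move=> A_closed; rewrite -(leq_add2r (\sum_(u | A u) (u != r))).
rewrite sum_deg_handshake leq_add2l [X in (_ <= X)%N]big_mkcond /=.
apply: leq_sum => y _; have [/A_closed->|] := boolP (A (p y)); first by [].
by case: (A y).
Qed.

End RootedTree.

Local Open Scope ring_scope.

Section TreePotential.
Variables (R : numDomainType) (V : finType) (p : V -> V) (r : V).
Hypothesis tree : rooted_tree p r.
Variable w : V -> R.

Definition subtree_weight (z : V) : R := \sum_(u | fconnect p u z) w u.

Definition tree_potential (x : V) : R :=
  \sum_(z | (z != r) && fconnect p x z) subtree_weight z.

Lemma subtree_weight_root : subtree_weight r = \sum_u w u.
Proof. by apply: eq_bigl => u; case: tree => _ ->. Qed.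

Lemma sum_children_subtree_weight x :
  \sum_(y | is_child p x y) subtree_weight y = subtree_weight x - w x.
Proof.
rewrite /subtree_weight (exchange_big_dep predT) //=.
have inner u : \sum_(y | is_child p x y && fconnect p u y) w u =
    w u *+ (fconnect p u x && (u != x)).
  rewrite -(count_children_on_path tree) -sumrMnr big_mkcond.
  by apply: eq_bigr => y _; case: (_ && _).
rewrite (eq_bigr _ (fun u _ => inner u)) [in RHS](bigD1 x) ?connect0 //=.
rewrite [RHS]addrC addKr.
rewrite [RHS]big_mkcond; apply: eq_bigr => u _.
by case: (_ && _).
Qed.

Lemma tree_potential_child x y :
  is_child p x y -> tree_potential y = tree_potential x + subtree_weight y.
Proof.
move=> xy; have /andP[/eqP pyx yx] := xy.
have yr : y != r by apply: contra_neq yx => yr; rewrite -pyx yr parent_root.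
rewrite /tree_potential (bigD1 y) ?yr ?connect0 //= addrC; congr (_ + _).
apply: eq_bigl => z; rewrite fconnect_eqVf pyx [y == z]eq_sym.
have [->|_] := eqVneq z y; last by rewrite andbT.
by rewrite andbF (negbTE (child_not_ancestor tree xy)) andbF.
Qed.

Lemma tree_potential_drift x :
  \sum_y (adj p r x y)%:R * (tree_potential y - tree_potential x) =
  (x == r)%:R * \sum_u w u - w x.
Proof.
have loop0 y :
    (((x == r) && (y == r)).*2)%:R * (tree_potential y - tree_potential x) = 0.
  case: (x =P r) => [->|_]; case: (y =P r) => [->|_] /=;
  by rewrite ?subrr ?mulr0 ?mul0r.
have child_step y :
    (is_child p x y)%:R * (tree_potential y - tree_potential x) =
    if is_child p x y then subtree_weight y else 0.
  case: ifP => [/tree_potential_child->|_]; last by rewrite mul0r.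
  by rewrite addrC addKr mul1r.
rewrite (eq_bigr _ (fun y _ => congr1 (fun n => n%:R * _) (adjE tree x y))).
under eq_bigr => y _ do rewrite !natrD !mulrDl loop0 addr0 child_step.
rewrite big_split /= -big_mkcond sum_children_subtree_weight.
rewrite (bigD1 (p x)) //= big1 ?addr0 => [|y /negbTE->]; last by rewrite mul0r.
have [->|xr] := eqVneq x r.
  by rewrite andbF mul0r add0r mul1r subtree_weight_root.
have xpx : is_child p (p x) x.
  by rewrite /is_child eqxx eq_sym (parent_fixed tree).
rewrite eqxx /= mul1r mul0r (tree_potential_child xpx); ring.
Qed.

Lemma tree_potential_norm_le x :
  `|tree_potential x| <= #|V|%:R * \sum_u `|w u|.
Proof.
have sum_filter_le (P : pred V) (F : V -> R) :
    (forall z, 0 <= F z) -> \sum_(z | P z) F z <= \sum_z F z.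
  move=> F_ge0; rewrite big_mkcond ler_sum // => z _.
  by case: (P z); rewrite ?F_ge0.
have subtree_le z : `|subtree_weight z| <= \sum_u `|w u|.
  apply: le_trans (ler_norm_sum _ _ _) _.
  exact: sum_filter_le (fun _ => normr_ge0 _).
apply: le_trans (ler_norm_sum _ _ _) _.
apply: le_trans (ler_sum _ (fun z _ => subtree_le z)) _.
rewrite mulr_natl -sumr_const; apply: sum_filter_le => _; exact: sumr_ge0.
Qed.

End TreePotential.

Section FfunCons.
Variables (V : finType) (R : nmodType).

Definition ffun_cons n (x : V) (g : {ffun 'I_n -> V}) : {ffun 'I_n.+1 -> V} :=
  [ffun i => if unlift ord0 i is Some j then g j else x].

Lemma ffun_cons0 n x (g : {ffun 'I_n -> V}) : ffun_cons x g ord0 = x.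
Proof. by rewrite ffunE unlift_none. Qed.

Lemma ffun_consS n x (g : {ffun 'I_n -> V}) j :
  ffun_cons x g (lift ord0 j) = g j.
Proof. by rewrite ffunE liftK. Qed.

Lemma big_ffun_cons n (F : {ffun 'I_n.+1 -> V} -> R) :
  \sum_(w : {ffun 'I_n.+1 -> V}) F w =
  \sum_(x : V) \sum_(g : {ffun 'I_n -> V}) F (ffun_cons x g).
Proof.
rewrite pair_bigA /= (reindex (fun xg : V * _ => ffun_cons xg.1 xg.2)) //.
exists (fun w : {ffun 'I_n.+1 -> V} => (w ord0, [ffun j => w (lift ord0 j)])).
  move=> [x g] _ /=; rewrite ffun_cons0; congr pair.
  by apply/ffunP => j; rewrite ffunE ffun_consS.
move=> w _; apply/ffunP => i; rewrite ffunE.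
by case: (unliftP ord0 i) => [j ->|->]; rewrite ?liftK ?unlift_none // ffunE.
Qed.

Lemma big_ffun_cons_at n (F : {ffun 'I_n.+1 -> V} -> R) x :
  \sum_(w : {ffun 'I_n.+1 -> V} | w ord0 == x) F w =
  \sum_(g : {ffun 'I_n -> V}) F (ffun_cons x g).
Proof.
rewrite big_mkcond big_ffun_cons (bigD1 x) //= [X in _ + X]big1 ?addr0.
  by apply: eq_bigr => g _; rewrite ffun_cons0 eqxx.
by move=> y yx; apply: big1 => g _; rewrite ffun_cons0 (negbTE yx).
Qed.

Lemma big_ffun_ord0 (F : {ffun 'I_0 -> V} -> R) (g0 : {ffun 'I_0 -> V}) :
  \sum_(g : {ffun 'I_0 -> V}) F g = F g0.
Proof. by rewrite (big_pred1 g0) // => g /=; apply/esym/eqP/ffunP => -[]. Qed.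

End FfunCons.

Section MarkovChain.
Variables (R : realDomainType) (V : finType) (P : V -> V -> R).

Definition path_weight t (w : {ffun 'I_t.+1 -> V}) : R :=
  \prod_(i < t) P (w (widen_ord (leqnSn t) i)) (w (lift ord0 i)).

Definition occupation (A : pred V) t (w : {ffun 'I_t.+1 -> V}) : nat :=
  #|[set i | A (w i)]|.

Definition expected_occupation (A : pred V) (x : V) t : R :=
  \sum_(w : {ffun 'I_t.+1 -> V} | w ord0 == x)
    path_weight w * (occupation A w)%:R.

Lemma path_weight_ord0 (w : {ffun 'I_1 -> V}) : path_weight w = 1.
Proof. exact: big_ord0. Qed.

Lemma path_weight_cons t x (g : {ffun 'I_t.+1 -> V}) :
  path_weight (ffun_cons x g) = P x (g ord0) * path_weight g.
Proof.
rewrite /path_weight big_ord_recl; congr (_ * _).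
  rewrite (_ : widen_ord _ ord0 = ord0) ?ffun_cons0 ?ffun_consS //.
  exact: val_inj.
apply: eq_bigr => i _.
rewrite (_ : widen_ord _ (lift ord0 i) = lift ord0 (widen_ord (leqnSn t) i)).
  by rewrite !ffun_consS.
exact: val_inj.
Qed.

Lemma occupationE (A : pred V) t (w : {ffun 'I_t.+1 -> V}) :
  occupation A w = (\sum_i A (w i))%N.
Proof.
rewrite /occupation -sum1_card big_mkcond /=.
by apply: eq_bigr => i _; rewrite inE; case: (A (w i)).
Qed.

Lemma occupation_ord0 (A : pred V) (w : {ffun 'I_1 -> V}) :
  occupation A w = A (w ord0).
Proof. by rewrite occupationE big_ord_recl big_ord0 addn0. Qed.

Lemma occupation_cons (A : pred V) t x (g : {ffun 'I_t.+1 -> V}) :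
  occupation A (ffun_cons x g) = (A x + occupation A g)%N.
Proof.
rewrite !occupationE big_ord_recl ffun_cons0; congr addn.
by apply: eq_bigr => i _; rewrite ffun_consS.
Qed.

Hypothesis P_row_sum1 : forall x, \sum_y P x y = 1.

Lemma sum_first_step t x (F : {ffun 'I_t.+1 -> V} -> R) :
  \sum_(g : {ffun 'I_t.+1 -> V}) P x (g ord0) * F g =
  \sum_y P x y * \sum_(g : {ffun 'I_t.+1 -> V} | g ord0 == y) F g.
Proof.
rewrite (partition_big (fun g : {ffun 'I_t.+1 -> V} => g ord0) predT) //=.
by apply: eq_bigr => y _; rewrite big_distrr; apply: eq_bigr => g /eqP->.
Qed.

Lemma sum_path_weight t x :
  \sum_(w : {ffun 'I_t.+1 -> V} | w ord0 == x) path_weight w = 1.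
Proof.
elim: t x => [|t IHt] x.
  by rewrite big_ffun_cons_at (big_ffun_ord0 _ [ffun=> x]) path_weight_ord0.
rewrite big_ffun_cons_at (eq_bigr _ (fun g _ => path_weight_cons x g)).
rewrite sum_first_step -[RHS](P_row_sum1 x).
by apply: eq_bigr => y _; rewrite IHt mulr1.
Qed.

Lemma expected_occupation0 (A : pred V) x :
  expected_occupation A x 0 = (A x)%:R.
Proof.
rewrite /expected_occupation big_ffun_cons_at (big_ffun_ord0 _ [ffun=> x]).
by rewrite path_weight_ord0 occupation_ord0 ffun_cons0 mul1r.
Qed.

Lemma expected_occupationS (A : pred V) x t :
  expected_occupation A x t.+1 =
  (A x)%:R + \sum_y P x y * expected_occupation A y t.
Proof.
rewrite /expected_occupation big_ffun_cons_at.
under eq_bigr => g _ do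
  rewrite path_weight_cons occupation_cons natrD -mulrA mulrDr mulrDr.
rewrite big_split /= !sum_first_step; congr (_ + _).
rewrite -[RHS]mulr1 -(P_row_sum1 x) big_distrr /=; apply: eq_bigr => y _.
by rewrite -big_distrl /= sum_path_weight mul1r mulrC.
Qed.

Hypothesis P_ge0 : forall x y, 0 <= P x y.

Lemma expected_occupation_le_drift (A : pred V) (c B : R) (f : V -> R) :
  0 <= c -> (forall x, f x <= B) ->
  (forall x, (A x)%:R - c <= \sum_y P x y * f y - f x) ->
  forall t x, expected_occupation A x t <= t.+1%:R * c + B - f x + 1.
Proof.
move=> c_ge0 f_le drift t; elim: t => [|t IHt] x.
  rewrite expected_occupation0 mul1r.
  have := f_le x; case: (A x) => /=; lra.
set K := t.+1%:R * c + B + 1.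
have step : \sum_y P x y * expected_occupation A y t <= K - \sum_y P x y * f y.
  rewrite -[K]mulr1 -(P_row_sum1 x) big_distrr -sumrB /=.
  apply: ler_sum => y _; rewrite [K * _]mulrC -mulrBr ler_wpM2l //.
  by have := IHt y; rewrite /K; lra.
rewrite expected_occupationS -[t.+2]addn1 natrD mulrDl mul1r.
by have := drift x; rewrite /K in step; lra.
Qed.

End MarkovChain.

Section SimpleRandomWalk.
Variables (R : realFieldType) (V : finType) (p : V -> V) (r : V).
Hypothesis tree : rooted_tree p r.

Lemma srw_ge0 x y : 0 <= srw R p r x y.
Proof. by rewrite /srw divr_ge0 ?ler0n. Qed.

Lemma srw_row_sum1 x : \sum_y srw R p r x y = 1.
Proof.
rewrite /srw -big_distrl /= -natr_sum -/(deg p r x) mulfV //.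
by rewrite pnatr_eq0 -lt0n (deg_gt0 tree).
Qed.

Lemma srw_drift (f : V -> R) x :
  \sum_y srw R p r x y * f y - f x =
  (deg p r x)%:R^-1 * \sum_y (adj p r x y)%:R * (f y - f x).
Proof.
transitivity (\sum_y srw R p r x y * f y - (\sum_y srw R p r x y) * f x).
  by rewrite srw_row_sum1 mul1r.
rewrite big_distrl -sumrB big_distrr /=.
by apply: eq_bigr => y _; rewrite /srw; ring.
Qed.

Variables (A : pred V) (c : R).
Hypothesis A_closed : forall y, A (p y) -> A y.

Definition occupation_weight (u : V) : R := (deg p r u)%:R * (c - (A u)%:R).

Lemma sum_occupation_weight :
  \sum_u occupation_weight u =
  c * (2 * #|V|)%:R - (\sum_(u | A u) deg p r u)%:R.
Proof.
rewrite -(sum_deg tree) !natr_sum big_distrr [X in _ - X]big_mkcond -sumrB /=.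
apply: eq_bigr => u _; rewrite /occupation_weight.
by case: (A u); rewrite /=; ring.
Qed.

Lemma sum_norm_occupation_weight : 0 <= c ->
  \sum_u `|occupation_weight u| <=
  c * (2 * #|V|)%:R + (\sum_(u | A u) deg p r u)%:R.
Proof.
move=> c_ge0; rewrite -(sum_deg tree) !natr_sum big_distrr.
rewrite [X in _ + X]big_mkcond -big_split /=.
apply: ler_sum => u _; rewrite /occupation_weight normrM ger0_norm ?ler0n //.
rewrite [c * _]mulrC; case: (A u) => /=.
  rewrite -[X in _ <= _ + X]mulr1 -mulrDr ler_wpM2l ?ler0n // ler_norml.
  by apply/andP; split; lra.
by rewrite subr0 addr0 ger0_norm.
Qed.

Lemma expected_occupation_srw_le : #|A|%:R <= c * #|V|%:R ->
  forall t x, expected_occupation (srw R p r) A x t <=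
    t.+1%:R * c + 4 * #|V|%:R * (c * #|V|%:R + #|A|%:R) + 1.
Proof.
move=> A_le t x; set n := #|V|%:R; set K := #|A|%:R.
set f := tree_potential p r occupation_weight.
have n_gt0 : 0 < n by rewrite ltr0n; apply/card_gt0P; exists r.
have c_ge0 : 0 <= c by rewrite -(pmulr_lge0 _ n_gt0); apply: le_trans A_le.
have degA : (\sum_(u | A u) deg p r u)%:R <= 2 * K.
  by rewrite -natrM ler_nat; apply: sum_deg_le_closed.
have two_cn : c * (2 * #|V|)%:R = 2 * (c * n) by rewrite natrM; ring.
have weight_ge0 : 0 <= \sum_u occupation_weight u.
  by rewrite sum_occupation_weight two_cn; lra.
have weight_norm_le : \sum_u `|occupation_weight u| <= 2 * (c * n + K).
  by apply: le_trans (sum_norm_occupation_weight c_ge0) _; rewrite two_cn; lra.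
have f_le y : `|f y| <= n * (2 * (c * n + K)).
  apply: le_trans (tree_potential_norm_le _ _ _ y) _.
  by apply: ler_wpM2l; [exact: ltW | exact: weight_norm_le].
have drift y : (A y)%:R - c <= \sum_z srw R p r y z * f z - f y.
  have deg_gt0 : 0 < (deg p r y)%:R :> R by rewrite ltr0n (deg_gt0 tree).
  have -> : (A y)%:R - c = (deg p r y)%:R^-1 * - occupation_weight y.
    by rewrite /occupation_weight mulrN mulKf ?opprB // lt0r_neq0.
  rewrite srw_drift tree_potential_drift //; apply: ler_wpM2l.
    by rewrite invr_ge0 ltW.
  by have := mulr_ge0 (ler0n _ (y == r)) weight_ge0; lra.
have := expected_occupation_le_drift srw_row_sum1 srw_ge0 c_ge0
  (fun y => le_trans (ler_norm _) (f_le y)) drift t x.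
have := f_le x; rewrite -normrN => /(le_trans (ler_norm _)); lra.
Qed.

End SimpleRandomWalk.

Theorem corollary5p5 (R : realFieldType) (V : finType) (p : V -> V) (r : V)
  (hT : rooted_tree p r) (hcard : (2 <= #|V|)%N) (v : V) (t : nat) :
  expected_visits R p r v t <=
    (#|[set u : V | in_subtree p v u]|)%:R *
      (((t + 3)%:R / (#|V|%:R - 1)) + 48 * (#|V|)%:R).
Proof.
have -> : expected_visits R p r v t =
  expected_occupation (srw R p r) (in_subtree p v) v t by [].
have subtree_closed y : in_subtree p v (p y) -> in_subtree p v y.
  exact: connect_trans (fconnect1 p y).
rewrite cardsE; set K := #|in_subtree p v|%:R; set n := #|V|%:R.
have K_ge1 : 1 <= K.
  by rewrite ler1n; apply/card_gt0P; exists v; apply: connect0.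
have n_ge2 : 2 <= n by rewrite ler_nat.
set c := K / (n - 1).
have c_def : c * (n - 1) = K by rewrite mulfVK //; apply: lt0r_neq0; lra.
have c_ge0 : 0 <= c by rewrite divr_ge0 //; lra.
have c_le_K : c <= K by rewrite -c_def ler_peMr //; lra.
have cn : c * n = K + c by rewrite -c_def; ring.
have bound := expected_occupation_srw_le hT subtree_closed (c := c) _ t v.
apply: le_trans (bound _) _; rewrite -/K -/n cn; first lra.
rewrite [X in _ <= X](_ : _ = (t + 3)%:R * c + 48 * (n * K)); last first.
  by rewrite /c; ring.
have nc_le : n * c <= n * K by rewrite ler_wpM2l //; lra.
have nK_ge1 : 1 <= n * K by rewrite -[1]mul1r ler_pM //; lra.
rewrite -addn1 !natrD; have := ler0n R t; lra.
Qed.
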